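(* Let $E$ be a finite-dimensional real Euclidean space with translation space $V$, and let $\Phi_{\mathrm{aff}}$ be an affine root system on $E$ with a chosen chamber $C$ and corresponding basis $B$. Let $J\subset B$ be such that $DJ=\{Da\mid a\in J\}$ is linearly independent. Then there exists a basis $B_J$ of the affine root system $(\Phi_{\mathrm{aff}})_J$ on $E_J$ with $J\subset B_J$.
   Context: Affine root systems are in the sense of Macdonald: a set of affine-linear functions on $E$. For an affine root $a$, $Da\in V^*$ is its gradient: $a(x+v)=a(x)+(Da)(v)$. Set $V^J=\{v\in V\mid \alpha(v)=0\ \forall\alpha\in DJ\}$, $E_J=E/V^J$, an affine space with translation space $V/V^J$, given the inner product transported from the orthogonal complement $(V^J)^\perp$ via the isomorphism $(V^J)^\perp\to V/V^J$. Let $(\Phi_{\mathrm{aff}})_J=\{a\in\Phi_{\mathrm{aff}}\mid Da\in\mathbb R\cdot DJ\}$; its elements are constant along $V^J$ and hence are affine functions on $E_J$, and $(\Phi_{\mathrm{aff}})_J$ is an affine root system on $E_J$. *)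

From HB Require Import structures.
From mathcomp Require Import all_boot all_order all_algebra.
From mathcomp Require Import all_classical all_reals all_analysis.
Set Implicit Arguments. Unset Strict Implicit. Unset Printing Implicit Defensive.
Import Order.TTheory GRing.Theory Num.Theory.
Import numFieldNormedType.Exports.
Local Open Scope classical_set_scope.
Local Open Scope ring_scope.

(* Model: the Euclidean affine space E is R^n = 'rV[R]_n with the standard
   inner product (origin chosen).  A "Euclidean space" on which an affine root
   system lives is a linear subspace W of R^n, given as a set; an affine
   function on W is represented uniquely by a pair (g, c) with gradient g in W
   (V^* identified with V through the inner product) and constant c:
   x |-> <g, x> + c. *)

Section AffineRootSystems.
Variables (R : realType) (n : nat).

Definition vec := 'rV[R]_n.
Definition aff := (vec * R)%type.

Definition dot (u v : vec) : R := \sum_(i < n) u ord0 i * v ord0 i.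

Definition aeval (a : aff) (x : vec) : R := dot a.1 x + a.2.

Definition cpair (a b : aff) : R := 2 * dot a.1 b.1 / dot a.1 a.1.

Definition refl (a : aff) (x : vec) : vec :=
  x - (2 * aeval a x / dot a.1 a.1) *: a.1.

(* action of s_a on affine functions: (s_a b) = b o s_a^{-1} = b o s_a
   = b - <a^vee, b> a *)
Definition refl_aff (a b : aff) : aff :=
  (b.1 - cpair a b *: a.1, b.2 - cpair a b * a.2).

Definition weyl (S : set aff) : set (vec -> vec) :=
  [set w | exists s : seq aff, (forall a, a \in s -> S a) /\
           w = foldr (fun a f => refl a \o f) id s].

Definition span_set (X : set vec) : set vec :=
  [set v | exists s : seq vec, (forall u, u \in s -> X u) /\ v \in vector.span s].

Definition lin_indep (X : set vec) : Prop :=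
  forall s : seq vec, uniq s -> (forall u, u \in s -> X u) -> free s.

Definition affine_root_system (W : set vec) (S : set aff) : Prop :=
  [/\
      (forall a, S a -> W a.1 /\ a.1 != 0),
      (forall (v : vec) (c : R), W v -> exists (s : seq aff) (k : nat -> R),
          (forall a, a \in s -> S a) /\
          v = \sum_(i < size s) k i *: (nth (0, 0) s i).1 /\
          c = \sum_(i < size s) k i * (nth (0, 0) s i).2),
      (forall a b, S a -> S b -> S (refl_aff a b)),
      (forall a b, S a -> S b -> cpair a b \is a Num.int) &
      (forall K : set vec, K `<=` W -> compact K ->
          finite_set [set w | weyl S w /\ exists2 x, K x & K (w x)])].

Definition regular_set (W : set vec) (S : set aff) : set vec :=
  W `\` [set x | exists2 a, S a & aeval a x = 0].

Definition chamber (W : set vec) (S : set aff) (C : set vec) : Prop :=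
  exists2 x, regular_set W S x & C = connected_component (regular_set W S) x.

Definition is_wall (W : set vec) (C : set vec) (a : aff) : Prop :=
  exists x, [/\ W x, aeval a x = 0 &
    exists2 e : R, 0 < e & forall y, W y -> aeval a y = 0 -> ball x e y ->
                                closure C y].

Definition basis_of_chamber (W : set vec) (S : set aff) (C : set vec) : set aff :=
  [set a | [/\ S a, is_wall W C a, (forall x, C x -> 0 < aeval a x) &
             ~ S (2^-1 *: a.1, a.2 / 2)]].

Definition grads (J : set aff) : set vec := fst @` J.

(* E_J = E / V^J is identified isometrically with (V^J)^perp = span DJ *)
Definition E_J (J : set aff) : set vec := span_set (grads J).

(* (Phi_aff)_J = {a in Phi_aff | Da in R.DJ}, as affine functions on E_J *)
Definition restr_sys (S : set aff) (J : set aff) : set aff :=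
  [set a | S a /\ span_set (grads J) a.1].

End AffineRootSystems.

From HB Require Import structures.
From mathcomp Require Import all_boot all_order all_algebra.
From mathcomp Require Import all_classical all_reals all_analysis.
From mathcomp Require Import zify.
Set Implicit Arguments. Unset Strict Implicit. Unset Printing Implicit Defensive.
Import Order.TTheory GRing.Theory Num.Theory.
Import numFieldNormedType.Exports.
Local Open Scope classical_set_scope.
Local Open Scope ring_scope.

(* Let P be the orthogonal projection of E onto E_J = span DJ.  Every root a
   of (Phi_aff)_J has its gradient in E_J, so a o P = a.  Hence P maps regular
   points to regular points and, being continuous, maps the chamber C into a
   chamber C_J of (Phi_aff)_J.  For a in J: a stays positive on C_J, which is
   connected and on which a does not vanish; the wall of C along H_a projects
   onto a wall of C_J, since P maps the closure of C into that of C_J; and a/2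
   is not a root of (Phi_aff)_J since it is not one of Phi_aff. *)

Section Dot.
Variables (R : realType) (n : nat).
Implicit Types (u v : vec R n) (a : aff R n).

Lemma dot_mxE u v : dot u v = (u *m v^T) 0 0.
Proof. by rewrite /dot !mxE; apply: eq_bigr => j _; rewrite !mxE. Qed.

Lemma dot_continuous u : continuous (dot u).
Proof.
rewrite /dot => x; apply: (continuous_big add_continuous) => j _ {}x.
by apply: continuousM; [exact: cst_continuous | exact: coord_continuous].
Qed.

Lemma aeval_continuous a : continuous (aeval a).
Proof. by move=> x; apply: continuousD; [exact: dot_continuous | exact: cst_continuous]. Qed.

End Dot.

Lemma mulmxr_continuous (R : realType) m n (A : 'M[R]_(m, n)) :
  continuous (fun x : 'rV[R]_m => x *m A).
Proof.
move=> x; rewrite (_ : (fun x => x *m A) = fun x => \sum_i x 0 i *: row i A).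
  apply: (continuous_big add_continuous) => i _ {}x.
  exact/continuousZr_tmp/coord_continuous.
by apply: funext => y; rewrite mulmx_sum_row.
Qed.

Section OrthogonalProjection.
Variables (R : realType) (n : nat) (s : seq (vec R n)).
Hypothesis free_s : free s.

Definition seq_mx : 'M[R]_(size s, n) := \matrix_(i < size s) s`_i.
Definition gram_mx : 'M[R]_(size s) := seq_mx *m seq_mx^T.
Definition orthoproj_mx : 'M[R]_n := seq_mx^T *m invmx gram_mx *m seq_mx.
Definition orthoproj (x : vec R n) : vec R n := x *m orthoproj_mx.

Lemma memv_span_seq_mxP y : reflect (exists u, y = u *m seq_mx) (y \in span s).
Proof.
apply: (iffP idP) => [/(coord_span (X := in_tuple s)) ->|[u ->]].
  exists (\row_i coord (in_tuple s) i y); rewrite mulmx_sum_row.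
  by apply: eq_bigr => i _; rewrite rowK mxE.
rewrite mulmx_sum_row; apply: memv_suml => i _; apply/memvZ.
by rewrite rowK; apply/memv_span/mem_nth.
Qed.

Lemma seq_mx_inj (u : 'rV_(size s)) : u *m seq_mx = 0 -> u = 0.
Proof.
rewrite mulmx_sum_row => u0; apply/rowP => i; rewrite mxE.
apply: (freeP (X := in_tuple s) free_s (fun i => u 0 i)).
by rewrite -[RHS]u0; apply: eq_bigr => j _; rewrite rowK.
Qed.

Lemma gram_mx_unit : gram_mx \in unitmx.
Proof.
rewrite -row_free_unit; apply: inj_row_free => u ugram0.
apply: seq_mx_inj; set w := u *m seq_mx.
have : dot w w = 0 by rewrite dot_mxE trmx_mul mulmxA -(mulmxA u) ugram0 mul0mx mxE.
rewrite /dot => /eqP; rewrite psumr_eq0 => [/allP w0|i _]; last by rewrite -expr2 sqr_ge0.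
apply/rowP => j; rewrite [RHS]mxE; have /implyP := w0 j (mem_index_enum j).
by rewrite mulf_eq0 orbb => /(_ isT)/eqP.
Qed.

Lemma orthoproj_mx_tr : orthoproj_mx^T = orthoproj_mx.
Proof. by rewrite !trmx_mul trmxK trmx_inv trmx_mul trmxK !mulmxA. Qed.

Lemma orthoproj_seq_mx u : orthoproj (u *m seq_mx) = u *m seq_mx.
Proof.
rewrite /orthoproj /orthoproj_mx !mulmxA -(mulmxA u seq_mx) -/gram_mx.
by rewrite mulmxK ?gram_mx_unit.
Qed.

Lemma orthoproj_id y : y \in span s -> orthoproj y = y.
Proof. by move=> /memv_span_seq_mxP [u ->]; rewrite orthoproj_seq_mx. Qed.

Lemma orthoproj_memv x : orthoproj x \in span s.
Proof.
apply/memv_span_seq_mxP; exists (x *m (seq_mx^T *m invmx gram_mx)).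
by rewrite /orthoproj /orthoproj_mx !mulmxA.
Qed.

Lemma dot_orthoproj g x : g \in span s -> dot g (orthoproj x) = dot g x.
Proof.
move=> sg; rewrite !dot_mxE /orthoproj trmx_mul orthoproj_mx_tr mulmxA.
by rewrite -/(orthoproj g) orthoproj_id.
Qed.

Lemma orthoproj_shift x y : y \in span s -> orthoproj (y + (x - orthoproj x)) = y.
Proof.
move=> sy; rewrite /orthoproj mulmxDl mulmxBl -!/(orthoproj _).
by rewrite (orthoproj_id sy) (orthoproj_id (orthoproj_memv x)) subrr addr0.
Qed.

Lemma orthoproj_continuous : continuous orthoproj.
Proof. exact: mulmxr_continuous. Qed.

End OrthogonalProjection.

Section SpanningSubseq.
Variables (K : fieldType) (vT : vectType K).

Lemma free_spanning_subseq (X : set vT) :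
  exists s, [/\ free s, (forall u, u \in s -> X u) & forall x, X x -> x \in span s].
Proof.
suff grow k s : (\dim {:vT} - size s <= k)%N -> free s -> (forall u, u \in s -> X u) ->
    exists s, [/\ free s, (forall u, u \in s -> X u) & forall x, X x -> x \in span s].
  by apply: (grow _ [::]); rewrite ?nil_free.
elim: k s => [|k IHk] s ks free_s sX.
all: have [spanX|] := pselect (forall x, X x -> x \in span s); first by exists s.
all: move=> /existsNP [x /not_implyP [Xx /negP xNs]].
all: have free_xs : free (x :: s) by rewrite free_cons xNs.
all: have /= size_xs : (size (x :: s) <= \dim {:vT})%N by rewrite -(eqP free_xs) dimvS ?subvf.
  by lia.
apply: (IHk (x :: s)) => //=; first by lia.
by move=> u; rewrite inE => /predU1P [->|/sX].
Qed.

End SpanningSubseq.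

Lemma span_setP (R : realType) n (X : set (vec R n)) s y :
  (forall u, u \in s -> X u) -> (forall x, X x -> x \in span s) ->
  span_set X y <-> y \in span s.
Proof.
move=> sX Xs; split=> [[t [tX]]|sy]; last by exists s.
by apply/subvP/span_subvP => u /tX/Xs.
Qed.

Lemma sub_span_set (R : realType) n (X : set (vec R n)) : X `<=` span_set X.
Proof.
move=> x Xx; exists [:: x]; split; last exact/memv_span/mem_head.
by move=> u /[!inE] /eqP ->.
Qed.

Section Topology.
Variables (T U : topologicalType).

Lemma closure_image_continuous (f : T -> U) (A : set T) x :
  continuous f -> closure A x -> closure (f @` A) (f x).
Proof.
move=> fc Ax B /fc /Ax [y [Ay By]].
by exists (f y); split => //; exists y.
Qed.

Lemma image_connected_component (f : T -> U) (A : set T) (B : set U) x :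
  continuous f -> f @` A `<=` B -> A x ->
  f @` connected_component A x `<=` connected_component B (f x).
Proof.
move=> fc fAB Ax; apply: connected_component_max.
- by exists x => //; exact: connected_component_refl.
- by move=> _ [y /connected_component_sub Ay <-]; apply: fAB; exists y.
- apply: connected_continuous_connected; first exact: component_connected.
  exact: continuous_subspaceT.
Qed.

Lemma connected_nonvanishing_gt0 (R : realType) (f : T -> R) (A : set T) x y :
  connected A -> continuous f -> (forall z, A z -> f z != 0) ->
  A x -> A y -> 0 < f x -> 0 < f y.
Proof.
move=> cA fc f_neq0 Ax Ay fx_gt0; rewrite lt_def f_neq0 //=.
rewrite leNgt; apply/negP => fy_lt0.
have /connected_intervalP fA_itv : connected (f @` A).
  exact/connected_continuous_connected/continuous_subspaceT.
have [z Az fz0] : (f @` A) 0.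
  by apply: (fA_itv (f y) (f x)); [exists y|exists x|rewrite !ltW].
by move: (f_neq0 z Az); rewrite fz0 eqxx.
Qed.

End Topology.

Section RestrictedSystem.
Variables (R : realType) (n : nat) (S J : set (aff R n)) (s : seq (vec R n)).
Hypotheses (free_s : free s) (s_grads : forall u, u \in s -> grads J u)
  (grads_span : forall g, grads J g -> g \in span s).

Local Notation P := (orthoproj s).
Local Notation regJ := (regular_set (E_J J) (restr_sys S J)).

Lemma E_JP y : E_J J y <-> y \in span s.
Proof. exact: span_setP. Qed.

Lemma aeval_orthoproj a x : E_J J a.1 -> aeval a (P x) = aeval a x.
Proof. by move=> /E_JP Ja; rewrite /aeval dot_orthoproj. Qed.

Lemma regular_orthoproj y : regular_set setT S y -> regJ (P y).
Proof.
move=> [_ y_off]; split; first exact/E_JP/orthoproj_memv.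
by move=> [a [Sa Ja] a0]; apply: y_off; exists a; rewrite // -(aeval_orthoproj y Ja).
Qed.

(* Translation by [x - P x] maps the [e]-ball around [P x] in [H_a] into the
   [e]-ball around [x] in [H_a], and [P] undoes that translation. *)
Lemma is_wall_orthoproj (C D : set (vec R n)) a :
  E_J J a.1 -> P @` C `<=` D -> is_wall setT C a -> is_wall (E_J J) D a.
Proof.
move=> Ja CD [x [_ ax0 [e e_gt0 Hwall]]].
exists (P x); split; first exact/E_JP/orthoproj_memv.
  by rewrite aeval_orthoproj.
exists e => // y /E_JP sy ay0 xy.
have <- : P (y + (x - P x)) = y by exact: orthoproj_shift.
apply: (closureS CD); apply: closure_image_continuous; first exact: orthoproj_continuous.
apply: Hwall => //.
  by rewrite -aeval_orthoproj // orthoproj_shift.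
by move: xy; rewrite -!ball_normE /ball_ /= opprD addrA opprB addrC addrA subrK.
Qed.

Lemma basis_of_chamber_orthoproj x0 a :
  regular_set setT S x0 -> E_J J a.1 ->
  basis_of_chamber setT S (connected_component (regular_set setT S) x0) a ->
  basis_of_chamber (E_J J) (restr_sys S J) (connected_component regJ (P x0)) a.
Proof.
move=> reg_x0 Ja [Sa a_wall a_pos a_half].
have PC : P @` connected_component (regular_set setT S) x0 `<=` connected_component regJ (P x0).
  apply: image_connected_component => //; first exact: orthoproj_continuous.
  by move=> _ [y reg_y <-]; exact: regular_orthoproj.
split => //; first exact: is_wall_orthoproj a_wall.
- move=> z CJz; apply: (connected_nonvanishing_gt0 (x := P x0) _ _ _ _ CJz).
  + exact: component_connected.
  + exact: aeval_continuous.
  + by move=> y /connected_component_sub [_ y_off]; apply/eqP => ay0; apply: y_off; exists a.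
  + exact/connected_component_refl/regular_orthoproj.
  + by rewrite aeval_orthoproj //; apply/a_pos/connected_component_refl.
- by move=> [/a_half].
Qed.

End RestrictedSystem.

Theorem lemmaA1 (R : realType) (n : nat) (S : set (aff R n))
  (C : set (vec R n)) (J : set (aff R n)) :
  affine_root_system setT S ->
  chamber setT S C ->
  J `<=` basis_of_chamber setT S C ->
  lin_indep (grads J) ->
  exists CJ : set (vec R n),
    chamber (E_J J) (restr_sys S J) CJ /\
    J `<=` basis_of_chamber (E_J J) (restr_sys S J) CJ.
Proof.
move=> _ [x0 reg_x0 ->] J_basis _.
have [s [free_s s_grads grads_span]] := free_spanning_subseq (grads J).
exists (connected_component (regular_set (E_J J) (restr_sys S J)) (orthoproj s x0)).
split; first by exists (orthoproj s x0); first exact: regular_orthoproj.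
move=> a Ja; apply: basis_of_chamber_orthoproj => //; last exact: J_basis.
by apply: sub_span_set; exists a.
Qed.
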